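(* Let $(d_i)_{i\ge1}$ be an infinite alternate Lyndon word over the alphabet $\mathcal{A}=\{0,1,\dots,d_1\}$, let $M=M((d_i)_{i\ge1})$ be the associated alternate Lyndon system, and let $H_n$ be the number of words of length $n$ in the language $L_M$ of $M$. Then $H_0=1$ and for all $n\ge1$, $$H_n=\sum_{k=1}^{n}(-1)^k(d_{k-1}-d_k)H_{n-k}+1,$$ with the convention $d_0=0$.
   Context: Alphabets are finite sets $\{0,1,\dots,d\}$ of nonnegative integers with the usual order. Alternate order: for two words $x=x_1x_2\cdots$, $y=y_1y_2\cdots$ (both infinite, or both finite of the same length), $x\prec y$ iff there is $k$ with $x_i=y_i$ for all $i<k$ and $(-1)^k(x_k-y_k)<0$; $x\preceq y$ iff $x=y$ or $x\prec y$. Finite words of different lengths are compared after padding the shorter one on the right with zeros. An alternate Lyndon word is an infinite word $(d_i)_{i\ge1}$ such that $d_1d_2d_3\cdots\preceq d_nd_{n+1}\cdots$ for all $n\ge1$. The alternate Lyndon system $M((d_i)_{i\ge1})$ is the set of infinite words $x_1x_2\cdots$ over the alphabet with $d_1d_2\cdots\preceq x_kx_{k+1}\cdots$ for all $k\ge1$. Its language $L_M$ is the set of finite factors (finite blocks of consecutive letters) of elements of $M$; $H_n$ denotes the number of words of length $n$ in $L_M$, with $H_0=1$. *)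

From HB Require Import structures.
From mathcomp Require Import all_boot all_order all_algebra.
From Stdlib Require Import ClassicalEpsilon.
Set Implicit Arguments. Unset Strict Implicit. Unset Printing Implicit Defensive.

(* Infinite words are functions nat -> nat, indexed from 1 as in the paper:
   the word x_1 x_2 x_3 ... is represented by x with x i = x_i for i >= 1;
   the value x 0 is irrelevant. *)

Definition asbool (P : Prop) : bool :=
  if excluded_middle_informative P then true else false.

Definition alt_lt (x y : nat -> nat) : Prop :=
  exists k, 0 < k /\ (forall i, 0 < i < k -> x i = y i) /\
    (if odd k then y k < x k else x k < y k).

Definition alt_le (x y : nat -> nat) : Prop :=
  (forall i, 0 < i -> x i = y i) \/ alt_lt x y.

Definition suffix (x : nat -> nat) (n : nat) : nat -> nat :=
  fun i => x (n + i - 1).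

Definition alt_lyndon (d : nat -> nat) : Prop :=
  forall n, 0 < n -> alt_le d (suffix d n).

Definition in_M (d x : nat -> nat) : Prop :=
  (forall i, 0 < i -> x i <= d 1) /\
  (forall k, 0 < k -> alt_le d (suffix x k)).

Definition in_L (d : nat -> nat) (w : seq nat) : Prop :=
  exists x, in_M d x /\
    exists k, 0 < k /\ (forall i, i < size w -> nth 0 w i = x (k + i)).

Definition H (d : nat -> nat) (n : nat) : nat :=
  #|[pred w : n.-tuple 'I_(d 1).+1 | asbool (in_L d (map val w))]|.

Definition dz (d : nat -> nat) (k : nat) : nat := if k is 0 then 0 else d k.

From Pilot Require Import Defs.
From Stdlib Require Import ClassicalEpsilon.
From HB Require Import structures.
From mathcomp Require Import all_boot all_order all_algebra.
From mathcomp Require Import zify ring.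
Import GRing.Theory Num.Theory.

(* A word w lies in L_M iff its letters are at most d_1 and it is admissible:
   no suffix of w precedes, in the alternate order, the prefix of d of the
   same length (conversely, replacing the longest suffix of w that is a prefix
   of d by all of d gives an element of M starting with w).  Let Z_j(l) count the admissible
   words of length l lying strictly above d_j ... d_{j+l-1}.  Sorting them by
   their first letter a (a < d_j always qualifies, a > d_j never, and a = d_j
   leaves the admissible words strictly below d_{j+1} ... d_{j+l}, counted by
   trichotomy) gives Z_j(l+1) + Z_{j+1}(l) + 1 = (d_j + 1) H_l, while
   H_l = Z_1(l) + 1.  Unrolling this recurrence alternately in j yields the
   formula. *)

Set Implicit Arguments.
Unset Strict Implicit.
Unset Printing Implicit Defensive.

(* [alt_lt_seq p x y]: the alternate order on words of equal length whose
   first letter sits at an odd position iff [p]. *)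
Fixpoint alt_lt_seq (p : bool) (x y : seq nat) : bool :=
  match x, y with
  | a :: x', b :: y' =>
      if a == b then alt_lt_seq (~~ p) x' y' else if p then b < a else a < b
  | _, _ => false
  end.

Lemma alt_lt_seq_swap p x y : alt_lt_seq (~~ p) x y = alt_lt_seq p y x.
Proof.
elim: x y p => [|a x IHx] [|b y] p //=.
by rewrite eq_sym; case: eqP => _; [rewrite IHx | case: p].
Qed.

Lemma alt_lt_seq_irr p x : alt_lt_seq p x x = false.
Proof. by elim: x p => [|a x IHx] p //=; rewrite eqxx IHx. Qed.

Lemma alt_lt_seq_trans p x y z :
  alt_lt_seq p x y -> alt_lt_seq p y z -> alt_lt_seq p x z.
Proof.
elim: x y z p => [|a x IHx] [|b y] [|c z] p //=.
case: (eqVneq a b) => ab; case: (eqVneq b c) => bc; case: (eqVneq a c) => ac;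
  subst; rewrite ?eqxx ?(negbTE ab) ?(negbTE bc) ?(negbTE ac) //;
  first [exact: IHx | by case: p => /=; lia].
Qed.

Lemma alt_lt_seq_asym p x y : alt_lt_seq p x y -> ~~ alt_lt_seq p y x.
Proof.
by move=> lt_xy; apply/negP=> /(alt_lt_seq_trans lt_xy); rewrite alt_lt_seq_irr.
Qed.

Lemma alt_lt_seq_total p x y : size x = size y ->
  [|| alt_lt_seq p x y, alt_lt_seq p y x | x == y].
Proof.
elim: x y p => [|a x IHx] [|b y] p //= [size_xy].
rewrite eqseq_cons; case: (eqVneq a b) => [_|neq_ab] /=.
  by have := IHx y (~~ p) size_xy; rewrite !alt_lt_seq_swap orbCA.
by case: p => /=; lia.
Qed.

Fixpoint factor (x : nat -> nat) (m l : nat) : seq nat :=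
  if l is l'.+1 then x m :: factor x m.+1 l' else [::].

Lemma size_factor x m l : size (factor x m l) = l.
Proof. by elim: l m => //= l IHl m; rewrite IHl. Qed.

Lemma nth_factor x m l i : i < l -> nth 0 (factor x m l) i = x (m + i).
Proof.
elim: l m i => // l IHl m [|i] /=; first by rewrite addn0.
by move=> lt_il; rewrite IHl // addSnnS.
Qed.

Lemma eq_factor x y m m' l : (forall i, i < l -> x (m + i) = y (m' + i)) ->
  factor x m l = factor y m' l.
Proof.
move=> eq_xy; apply: (@eq_from_nth _ 0); rewrite !size_factor // => i lt_il.
by rewrite !nth_factor // eq_xy.
Qed.

Lemma factor_suffix x k l : factor x k l = factor (Defs.suffix x k) 1 l.
Proof. by apply: eq_factor => i _; rewrite /Defs.suffix; congr x; lia. Qed.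

Lemma factor_nth w x m : (forall i, i < size w -> nth 0 w i = x (m + i)) ->
  factor x m (size w) = w.
Proof.
move=> w_x; apply: (@eq_from_nth _ 0); rewrite size_factor // => i lt_iw.
by rewrite nth_factor // w_x.
Qed.

Lemma alt_lt_of_factor x y m l : 0 < m -> (forall i, 0 < i < m -> x i = y i) ->
  alt_lt_seq (odd m) (factor x m l) (factor y m l) -> alt_lt x y.
Proof.
elim: l m => //= l IHl m m_gt0 eq_xy; case: eqP => [eq_m|neq_m].
  rewrite -oddS; apply: IHl => // i /andP[i_gt0 lt_im1].
  by case: (ltngtP i m) => [lt_im|lt_mi|->]; [apply: eq_xy; rewrite i_gt0|lia|].
by exists m.
Qed.

Lemma alt_lt_of_prefix x y l :
  alt_lt_seq true (factor x 1 l) (factor y 1 l) -> alt_lt x y.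
Proof. by apply: alt_lt_of_factor => // i; lia. Qed.

Lemma alt_lt_le_asym x y : alt_lt x y -> alt_le y x -> False.
Proof.
case=> k [k_gt0 [eq_xy lt_xy]] [eq_yx|[k' [k'_gt0 [eq_yx lt_yx]]]].
  by move: lt_xy; rewrite eq_yx //; case: (odd k); lia.
case: (ltngtP k k') => [lt_kk'|lt_k'k|eq_kk'].
- by move: lt_xy; rewrite eq_yx ?k_gt0 //; case: (odd k); lia.
- by move: lt_yx; rewrite eq_xy ?k'_gt0 //; case: (odd k'); lia.
- by move: lt_xy lt_yx; rewrite eq_kk'; case: (odd k'); lia.
Qed.

Lemma alt_le_factor x y k l : alt_le y (Defs.suffix x k) ->
  ~~ alt_lt_seq true (factor x k l) (factor y 1 l).
Proof.
move=> le_yx; apply/negP; rewrite factor_suffix => /alt_lt_of_prefix lt_xy.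
exact: alt_lt_le_asym lt_xy le_yx.
Qed.

Lemma alt_le_eqr x y z :
  (forall i, 0 < i -> y i = z i) -> alt_le x y -> alt_le x z.
Proof.
move=> eq_yz [eq_xy|[k [k_gt0 [eq_xy lt_xy]]]].
  by left=> i i_gt0; rewrite eq_xy // eq_yz.
right; exists k; split=> //; split; last by rewrite -eq_yz.
by move=> i /andP[i_gt0 lt_ik]; rewrite -eq_yz // eq_xy ?i_gt0.
Qed.

Fixpoint admissible (d : nat -> nat) (w : seq nat) : bool :=
  if w is _ :: w' then
    admissible d w' && ~~ alt_lt_seq true w (factor d 1 (size w))
  else true.

Lemma admissible_drop d w p : admissible d w -> p < size w ->
  ~~ alt_lt_seq true (drop p w) (factor d 1 (size w - p)).
Proof.
elim: w p => //= a w IHw [|p] /andP[adm_w adm_aw] lt_pw; first by rewrite subn0.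
by rewrite subSS; apply: IHw.
Qed.

Lemma admissible_head d w : admissible d w ->
  ~~ alt_lt_seq true w (factor d 1 (size w)).
Proof. by case: w => //= a w /andP[]. Qed.

Lemma in_L_admissible d w : in_L d w -> admissible d w.
Proof.
case=> x [[_ x_M] [k [k_gt0 w_x]]].
elim: w k k_gt0 w_x => //= a w IHw k k_gt0 w_x; apply/andP; split.
  by apply: (IHw k.+1) => // i lt_iw; rewrite addSnnS -(w_x i.+1).
have := alt_le_factor (size w).+1 (x_M k k_gt0).
by rewrite (factor_nth (w := a :: w) w_x).
Qed.

Definition prepend (u : seq nat) (x : nat -> nat) : nat -> nat :=
  fun i => if i <= size u then nth 0 u i.-1 else x (i - size u).

Section Lyndon.

Variable d : nat -> nat.
Hypothesis lyndon_d : alt_lyndon d.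

Lemma lyndon_factor j l : 0 < j ->
  ~~ alt_lt_seq true (factor d j l) (factor d 1 l).
Proof. by move=> j_gt0; apply: alt_le_factor; apply: lyndon_d. Qed.

Lemma lyndon_le_head i : 0 < i -> d i <= d 1.
Proof. by move=> /(lyndon_factor 1) /=; case: eqP => [->|_]; lia. Qed.

Lemma admissible_factor j l : 0 < j -> admissible d (factor d j l).
Proof.
elim: l j => //= l IHl j j_gt0.
by rewrite IHl //= size_factor (lyndon_factor l.+1).
Qed.

Lemma prepend_le_head u i : all (fun a => a <= d 1) u -> 0 < i ->
  prepend u d i <= d 1.
Proof.
move=> u_d1 i_gt0; rewrite /prepend; case: (leqP i (size u)) => [le_iu|lt_ui].
  case: (ltnP i.-1 (size u)) => [lt_iu|le_ui]; last by rewrite nth_default.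
  exact: (all_nthP 0 u_d1).
by apply: lyndon_le_head; lia.
Qed.

Lemma alt_le_prepend u k : size u < k ->
  alt_le d (Defs.suffix (prepend u d) k).
Proof.
move=> lt_uk; apply: alt_le_eqr (@lyndon_d (k - size u) _); last lia.
by move=> i i_gt0; rewrite /Defs.suffix /prepend ifN; [congr d|]; lia.
Qed.

Lemma admissible_in_L w :
  all (fun a => a <= d 1) w -> admissible d w -> in_L d w.
Proof.
move=> w_d1 adm_w; set n := size w.
(* [m] is the length of the longest suffix of [w] that is a prefix of [d]. *)
pose P m := (m <= n) && (drop (n - m) w == factor d 1 m).
have P0 : P 0 by rewrite /P subn0 drop_size.
have P_le m : P m -> m <= n by case/andP.
have [m /andP[le_mn /eqP w_tail] max_m] := ex_maxnP (ex_intro _ 0 P0) P_le.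
pose u := take (n - m) w; pose x := prepend u d.
have size_u : size u = n - m by rewrite size_takel // leq_subr.
have x_w i : i < n -> x i.+1 = nth 0 w i.
  move=> lt_in; rewrite /x /prepend size_u; case: leqP => [le_i|lt_i].
    rewrite -[i](subnKC le_i) -nth_drop w_tail nth_factor; last lia.
    by congr d; lia.
  by rewrite /u nth_take.
exists x; split; last by exists 1; split=> // i lt_in; rewrite add1n x_w.
split=> [i|k k_gt0]; first apply: prepend_le_head.
  by move: w_d1; rewrite -(cat_take_drop (n - m) w) all_cat => /andP[].
case: (leqP k (n - m)) => [le_k|lt_k]; last by apply: alt_le_prepend; lia.
have lt_kn : k.-1 < n by lia.
have neq_tail : drop k.-1 w != factor d 1 (n - k.-1).
  apply/eqP=> eq_tail; have := max_m (n - k.-1).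
  by rewrite /P leq_subr subKn ?(ltnW lt_kn) // eq_tail eqxx; lia.
have w_x : drop k.-1 w = factor x k (n - k.-1).
  rewrite -[n - _](size_drop k.-1 w) factor_nth // => i.
  rewrite size_drop nth_drop => lt_i; rewrite -x_w; last lia.
  by rewrite -addSn prednK.
have := @alt_lt_seq_total true (drop k.-1 w) (factor d 1 (n - k.-1)).
rewrite size_drop size_factor (negbTE (admissible_drop adm_w lt_kn)).
rewrite (negbTE neq_tail) orbF /= => /(_ erefl).
by rewrite w_x [factor x _ _]factor_suffix => /alt_lt_of_prefix; right.
Qed.

End Lyndon.

Definition nwords (k n : nat) (P : pred (seq nat)) : nat :=
  #|[pred t : n.-tuple 'I_k | P (map val t)]|.

Lemma eq_nwords k n (P Q : pred (seq nat)) :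
  (forall w, size w = n -> all (fun a => a < k) w -> P w = Q w) ->
  nwords k n P = nwords k n Q.
Proof.
move=> eq_PQ; apply: eq_card => t; rewrite !inE eq_PQ ?size_map ?size_tuple //.
by apply/allP=> _ /mapP[a _ ->]; exact: ltn_ord.
Qed.

Lemma nwords_pred0 k n : nwords k n pred0 = 0.
Proof. exact: eq_card0. Qed.

Lemma nwordsID k n (P Q : pred (seq nat)) :
  nwords k n P = nwords k n (predI P Q) + nwords k n (predD P Q).
Proof.
rewrite /nwords -(cardID [pred t : n.-tuple 'I_k | Q (map val t)]).
by congr (_ + _); apply: eq_card => t; rewrite !inE // andbC.
Qed.

Lemma nwordsS k n (P : pred (seq nat)) :
  nwords k n.+1 P = \sum_(a < k) nwords k n (fun w => P (val a :: w)).
Proof.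
rewrite /nwords -sum1_card big_mkcond /=.
pose cons_tuple (p : 'I_k * n.-tuple 'I_k) := [tuple of p.1 :: p.2].
have cons_bij : bijective cons_tuple.
  exists (fun t : n.+1.-tuple 'I_k => (thead t, [tuple of behead t])).
    by case=> a t; congr pair; apply: val_inj.
  by move=> t; rewrite /cons_tuple [RHS]tuple_eta.
rewrite (reindex cons_tuple); last exact: onW_bij.
rewrite -(pair_big xpredT xpredT (fun a t => if cons_tuple (a, t) \in
  [pred t : n.+1.-tuple 'I_k | P (map val t)] then 1 else 0)) /=.
by apply: eq_bigr => a _; rewrite -sum1_card [RHS]big_mkcond.
Qed.

Lemma nwords_pred1 k s :
  all (fun a => a < k) s -> nwords k (size s) (pred1 s) = 1.
Proof.
elim: s => [|b s IHs] /=.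
  rewrite /nwords (eq_card (B := pred1 [tuple])) ?card1 // => t.
  by rewrite tuple0 !inE.
case/andP=> lt_bk lt_sk; rewrite nwordsS (bigD1 (Ordinal lt_bk)) //= big1.
  rewrite addn0 -(IHs lt_sk); apply: eq_nwords => w _ _.
  by rewrite /= eqseq_cons eqxx.
move=> a neq_a; apply: (etrans (eq_nwords _)) (nwords_pred0 _ _) => w _ _ /=.
rewrite eqseq_cons; case: eqP => //= eq_ab; move/eqP: neq_a; case.
exact: val_inj.
Qed.

Lemma sum_ord_lt_eq k m c b : m < k ->
  \sum_(a < k) (if a < m then c else if val a == m then b else 0) = m * c + b.
Proof.
move=> lt_mk.
rewrite -(big_mkord xpredT (fun a => if a < m then c else if a == m then b else 0)).
rewrite (big_cat_nat _ (n := m)) ?(ltnW lt_mk) // (big_ltn (m := m)) //= ltnn eqxx.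
rewrite big_nat_cond (eq_bigr (fun _ => c)) -?big_nat_cond; last first.
  by move=> i /andP[/andP[_ ->]].
rewrite sum_nat_const_nat subn0 big_nat_cond big1 ?addn0 //.
by move=> i /andP[/andP[lt_mi _] _]; rewrite ltnNge ltnW //= gtn_eqF.
Qed.

Definition nadm d l := nwords (d 1).+1 l (admissible d).

Definition nabove d j l :=
  nwords (d 1).+1 l (fun w => admissible d w && alt_lt_seq true (factor d j l) w).

Definition nbelow d j l :=
  nwords (d 1).+1 l (fun w => admissible d w && alt_lt_seq true w (factor d j l)).

Lemma nabove0 d j : nabove d j 0 = 0.
Proof. by apply: eq_card0 => t; rewrite inE andbF. Qed.

Lemma asboolE (P : Prop) (b : bool) : (P <-> b) -> asbool P = b.
Proof.
move=> eq_Pb; rewrite /asbool.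
case: excluded_middle_informative => [/eq_Pb //|not_P].
by apply/esym/negbTE/negP=> /eq_Pb.
Qed.

Lemma H_nadm d n : alt_lyndon d -> H d n = nadm d n.
Proof.
move=> lyndon_d; apply: (@eq_nwords _ _ (fun w => asbool (in_L d w))) => w _ w_d1.
apply: asboolE; split=> [|adm_w]; first exact: in_L_admissible.
exact: admissible_in_L.
Qed.

Section Counting.

Variable d : nat -> nat.
Hypothesis lyndon_d : alt_lyndon d.

Lemma nadm_split j l : 0 < j -> nadm d l = nbelow d j l + nabove d j l + 1.
Proof.
move=> j_gt0; pose s := factor d j l.
rewrite /nadm (nwordsID _ _ _ (fun w => alt_lt_seq true w s)) -addnA; congr (_ + _).
rewrite (nwordsID _ _ _ (fun w => alt_lt_seq true s w)); congr (_ + _).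
  apply: eq_nwords => w _ _ /=.
  by case: (boolP (alt_lt_seq true s w)) => [/alt_lt_seq_asym ->|]; rewrite ?andbF.
have s_d1 : all (fun a => a < (d 1).+1) s.
  apply/allP=> x /(nthP 0)[i]; rewrite size_factor => lt_il <-.
  by rewrite nth_factor // ltnS lyndon_le_head ?addn_gt0 ?j_gt0.
apply: etrans (nwords_pred1 s_d1); rewrite [size s]size_factor.
apply: eq_nwords => w size_w _ /=.
have := alt_lt_seq_total true (etrans size_w (esym (size_factor d j l))).
case: eqP => [->|_]; first by rewrite alt_lt_seq_irr admissible_factor.
by case: (alt_lt_seq true w s); case: (alt_lt_seq true s w); rewrite ?andbF.
Qed.

Lemma nbelow1 l : nbelow d 1 l = 0.
Proof.
apply: (etrans (eq_nwords _)) (nwords_pred0 _ _) => w size_w _ /=.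
case: (boolP (admissible d w)) => //= /admissible_head.
by rewrite size_w => /negbTE.
Qed.

Lemma admissible_above_cons j a w : 0 < j ->
  admissible d (a :: w) && alt_lt_seq true (factor d j (size w).+1) (a :: w) =
  if a < d j then admissible d w
  else (a == d j) && admissible d w && alt_lt_seq true w (factor d j.+1 (size w)).
Proof.
move=> j_gt0; have le_dj := lyndon_le_head lyndon_d j_gt0; rewrite /=.
case: (ltngtP a (d j)) => [lt_a|gt_a|->].
- have lt_a1 := leq_trans lt_a le_dj.
  by rewrite (ltn_eqF lt_a1) ltnNge (ltnW lt_a1) !andbT.
- by rewrite !andbF.
rewrite -[false]/(~~ true) !alt_lt_seq_swap /=.
case: eqP => [eq_d1|_]; last by rewrite ltnNge le_dj andbT.
case: (boolP (alt_lt_seq true w _)) => [lt_w|_]; last by rewrite !andbF.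
rewrite !andbT; apply: andb_idr => _; apply/negP=> lt_2w.
have := lyndon_factor lyndon_d (size w).+1 j_gt0.
rewrite /= eq_d1 eqxx -[false]/(~~ true) alt_lt_seq_swap.
by rewrite (alt_lt_seq_trans lt_2w lt_w).
Qed.

Lemma nabove_cons j l a : 0 < j ->
  nwords (d 1).+1 l
    (fun w => admissible d (a :: w) && alt_lt_seq true (factor d j l.+1) (a :: w)) =
  if a < d j then nadm d l else if a == d j then nbelow d j.+1 l else 0.
Proof.
move=> j_gt0; rewrite /nadm /nbelow.
case: ifP => [lt_a|ge_a]; last case: eqP => [eq_a|neq_a];
  last rewrite -[RHS](nwords_pred0 (d 1).+1 l);
  apply: eq_nwords => w size_w _;
  by rewrite -size_w admissible_above_cons // ?lt_a ?ge_a ?eq_a ?eqxx //; case: eqP.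
Qed.

Lemma nabove_rec j l : 0 < j ->
  nabove d j l.+1 + nabove d j.+1 l + 1 = (d j).+1 * nadm d l.
Proof.
move=> j_gt0; rewrite {1}/nabove nwordsS.
under eq_bigr => a _ do rewrite nabove_cons //.
rewrite sum_ord_lt_eq; last by rewrite ltnS lyndon_le_head.
by rewrite (nadm_split l (ltn0Sn j)); lia.
Qed.

End Counting.

Section AlternatingRecurrence.

Local Open Scope ring_scope.

Variable R : comRingType.
Variables (e h : nat -> R) (z : nat -> nat -> R).
Hypothesis z0 : forall j, z 0 j = 0.
Hypothesis zS : forall j l, (0 < j)%N -> z l.+1 j + z l j.+1 + 1 = (e j + 1) * h l.
Hypothesis h_z : forall l, h l = z l 1 + 1.

Definition alt_conv_e l j := \sum_(i < l) (-1) ^+ i * e (j + i) * h (l - i.+1).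

Definition alt_conv_1 l := \sum_(i < l) (-1) ^+ i * (h (l - i.+1) - 1).

Lemma alt_conv_eS l j : alt_conv_e l.+1 j = e j * h l - alt_conv_e l j.+1.
Proof.
rewrite /alt_conv_e big_ord_recl addn0 subn1 -sumrN; congr (_ + _); first by ring.
by apply: eq_bigr => i _; rewrite exprS lift0 addnS subSS; ring.
Qed.

Lemma alt_conv_1S l : alt_conv_1 l.+1 = h l - 1 - alt_conv_1 l.
Proof.
rewrite /alt_conv_1 big_ord_recl subn1 -sumrN; congr (_ + _); first by ring.
by apply: eq_bigr => i _; rewrite exprS lift0 subSS; ring.
Qed.

Lemma z_alt_conv l j : (0 < j)%N -> z l j = alt_conv_e l j + alt_conv_1 l.
Proof.
elim: l j => [|l IHl] j j_gt0.
  by rewrite z0 /alt_conv_e /alt_conv_1 !big_ord0 addr0.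
have -> : z l.+1 j = (e j + 1) * h l - z l j.+1 - 1.
  by rewrite -(@zS j l j_gt0); ring.
by rewrite IHl // alt_conv_eS alt_conv_1S; ring.
Qed.

Lemma alt_conv_1S_e l : alt_conv_1 l.+1 = alt_conv_e l 1.
Proof. by rewrite alt_conv_1S h_z z_alt_conv //; ring. Qed.

Lemma h_alt_conv l : h l.+1 = alt_conv_e l.+1 1 + alt_conv_e l 1 + 1.
Proof. by rewrite h_z z_alt_conv // alt_conv_1S_e. Qed.

Lemma sum_alt_diff n : e 0 = 0 ->
  \sum_(1 <= k < n.+2) (-1) ^+ k * (e k.-1 - e k) * h (n.+1 - k) =
  alt_conv_e n.+1 1 + alt_conv_e n 1.
Proof.
move=> e0; rewrite big_add1 big_mkord /=.
rewrite (eq_bigr (fun i : 'I_n.+1 => (-1) ^+ i * e (1 + i) * h (n.+1 - i.+1)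
  - (-1) ^+ i * e i * h (n.+1 - i.+1))); last first.
  by move=> i _; rewrite exprS add1n; ring.
rewrite sumrB [X in _ - X]big_ord_recl e0 mulr0 mul0r add0r -sumrN; congr (_ + _).
by apply: eq_bigr => i _; rewrite exprS lift0 subSS; ring.
Qed.

Lemma alternating_recurrence n : e 0 = 0 -> (0 < n)%N ->
  h n = \sum_(1 <= k < n.+1) (-1) ^+ k * (e k.-1 - e k) * h (n - k) + 1.
Proof. by move=> e0; case: n => // n _; rewrite sum_alt_diff // h_alt_conv. Qed.

End AlternatingRecurrence.

Local Open Scope ring_scope.

Theorem proposition1 (d : nat -> nat) (hd : alt_lyndon d) :
  H d 0 = 1%N /\
  forall n : nat, (0 < n)%N ->
    (H d n)%:Z =
      \sum_(1 <= k < n.+1)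
         (-1) ^+ k * ((dz d k.-1)%:Z - (dz d k)%:Z) * (H d (n - k))%:Z + 1.
Proof.
have H_split l : H d l = (nabove d 1 l + 1)%N.
  by rewrite (H_nadm l hd) (nadm_split hd l (ltn0Sn 0)) nbelow1.
split; first by rewrite H_split nabove0.
move=> n n_gt0; apply: (@alternating_recurrence _ (fun k => (dz d k)%:Z)
  (fun l => (H d l)%:Z) (fun l j => (nabove d j l)%:Z)) => //.
- move=> j; exact: (congr1 Posz (nabove0 d j)).
- move=> [//|j] l _ /=; rewrite (H_nadm l hd) -[1%R]/(Posz 1) -!PoszD -PoszM.
  by congr Posz; have := nabove_rec hd l (ltn0Sn j); lia.
- by move=> l /=; rewrite H_split PoszD.
Qed.
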